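(* Let $(X_n,\eta_n)$ be a time-homogeneous Markov chain on a locally finite set $\Sigma\subseteq\mathbb{R}_+\times S$ ($S$ finite), and suppose that for some $p>0$ there is $C_p<\infty$ with $\mathbb{E}_{x,i}[|X_{n+1}-X_n|^p]\le C_p$ for all $(x,i)\in\Sigma$. Let $r\in\mathbb{R}$, $\zeta\in(0,1)$, $E_n=\{|X_{n+1}-X_n|\le X_n^\zeta\}$, and let $g:S\to\mathbb{R}$. Then, as $x\to\infty$, \[\mathbb{E}_{x,i}[(g(\eta_{n+1})X_{n+1}^r-g(\eta_n)X_n^r)\mathbf 1(E_n)]=x^r\sum_{j\in S}(g(j)-g(i))q_{ij}(x)+o(x^r).\]
   Context: $\mathbb{E}_{x,i}[\cdot]=\mathbb{E}[\cdot\mid X_n=x,\eta_n=i]$ and $q_{ij}(x)=\Pr[\eta_{n+1}=j\mid X_n=x,\eta_n=i]$. *)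

From HB Require Import structures.
From mathcomp Require Import all_boot all_order all_algebra.
From mathcomp Require Import all_classical all_reals.
From mathcomp Require Import ereal topology normedtype sequences esum exp.
Set Implicit Arguments. Unset Strict Implicit. Unset Printing Implicit Defensive.
Import Order.TTheory GRing.Theory Num.Theory.
Local Open Scope classical_set_scope.
Local Open Scope ring_scope.

(* State space Sigma ⊆ R_+ × S, S finite; the one-step transition law of the
   time-homogeneous chain (X_n, eta_n) is a kernel P : state -> state -> R,
   P s t = Pr[(X_{n+1},eta_{n+1}) = t | (X_n,eta_n) = s]. *)

Definition locally_finite_state_space (R : realType) (S : finType)
    (Sigma : set (R * S)) : Prop :=
  (forall s, Sigma s -> 0 <= s.1) /\
  (forall M : R, finite_set [set s | Sigma s /\ s.1 <= M]).

Definition transition_kernel (R : realType) (S : finType)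
    (Sigma : set (R * S)) (P : R * S -> R * S -> R) : Prop :=
  (forall s t, 0 <= P s t) /\
  (forall s, Sigma s -> (\esum_(t in Sigma) (P s t)%:E = 1)%E).

Definition kexpect (R : realType) (S : finType) (Sigma : set (R * S))
    (P : R * S -> R * S -> R) (s : R * S) (f : R * S -> R) : \bar R :=
  ((\esum_(t in Sigma) (Num.max (P s t * f t) 0)%:E)
   - (\esum_(t in Sigma) (Num.max (- (P s t * f t)) 0)%:E))%E.

Definition qprob (R : realType) (S : finType) (Sigma : set (R * S))
    (P : R * S -> R * S -> R) (x : R) (i j : S) : R :=
  fine (\esum_(t in Sigma `&` [set t | t.2 = j]) (P (x, i) t)%:E).

From HB Require Import structures.
From mathcomp Require Import all_boot all_order all_algebra.
From mathcomp Require Import all_classical all_reals.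
From mathcomp Require Import ereal topology normedtype sequences esum exp.
From mathcomp Require Import finmap ring lra.
Import Order.TTheory GRing.Theory Num.Theory.
Local Open Scope classical_set_scope.
Local Open Scope ring_scope.

(* Since Sigma is locally finite, the expectation truncated to the window
   |X' - x| <= x^zeta is a finite sum.  Inside the window X'/x lies within
   h = x^(zeta-1) of 1, so X'^r = x^r (1 + O(h)) uniformly, and the truncated
   drift is x^r sum_j (g j - g i) Pr[eta' = j, in window] + o(x^r).  Each of
   these probabilities differs from q_ij(x) by at most the mass outside the
   window, which Markov's inequality for |X' - x|^p bounds by C_p x^(-zeta p). *)

Section esum_real.
Context {R : realType} {T : choiceType}.
Implicit Types (D B : set T) (h : T -> R).

Lemma esum_setI_le D B h : (forall t, D t -> 0 <= h t) ->
  (\esum_(t in D `&` B) (h t)%:E <= \esum_(t in D) (h t)%:E)%E.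
Proof.
move=> h_ge0; rewrite [X in (_ <= X)%E](esumID B); last by move=> t /h_ge0.
by rewrite leeDl// esum_ge0// => t [/h_ge0].
Qed.

Lemma esum_finite D h : finite_set D -> (forall t, D t -> 0 <= h t) ->
  (\esum_(t in D) (h t)%:E = (\sum_(t <- fset_set D) h t)%:E)%E.
Proof.
move=> finD h_ge0; rewrite esum_fset//; last by move=> t /set_mem /h_ge0.
by rewrite fsbig_finite// sumEFin.
Qed.

Lemma esum_finite_support D B h : finite_set (D `&` B) ->
  (forall t, D t -> 0 <= h t) -> (forall t, D t -> ~ B t -> h t = 0) ->
  (\esum_(t in D) (h t)%:E = (\sum_(t <- fset_set (D `&` B)) h t)%:E)%E.
Proof.
move=> finDB h_ge0 h_out; rewrite (esumID B); last by move=> t /h_ge0.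
rewrite [X in (_ + X)%E]esum1 ?adde0; last by move=> t [Dt /h_out ->].
by rewrite esum_finite// => t [/h_ge0].
Qed.

Lemma esum_scale_le D h c : 0 <= c -> (forall t, D t -> 0 <= h t) ->
  (\esum_(t in D) (c * h t)%:E <= c%:E * \esum_(t in D) (h t)%:E)%E.
Proof.
move=> c_ge0 h_ge0; apply: ge_ereal_sup => _ [X [finX XD]] <-.
rewrite fsbig_finite// sumEFin -mulr_sumr EFinM lee_wpmul2l ?lee_fin//.
by apply: ereal_sup_ubound; exists X; rewrite // fsbig_finite// sumEFin.
Qed.

Lemma esumZl D h c : 0 < c -> (forall t, D t -> 0 <= h t) ->
  (\esum_(t in D) (c * h t)%:E = c%:E * \esum_(t in D) (h t)%:E)%E.
Proof.
move=> c_gt0 h_ge0; apply/eqP; rewrite eq_le; apply/andP; split.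
  by apply: esum_scale_le => //; exact: ltW.
rewrite -lee_pdivlMl//.
under eq_esum => t _ do rewrite -[h t]mul1r -(mulVf (lt0r_neq0 c_gt0)) -mulrA.
apply: esum_scale_le => [|t /h_ge0 h_t_ge0]; first by rewrite invr_ge0 ltW.
by rewrite mulr_ge0 // ltW.
Qed.

End esum_real.

Section real_bounds.
Context {R : realType}.

Lemma powR_eventually_ge {a K : R} : 0 < a -> 0 < K ->
  exists M : R, 0 < M /\ forall x, M <= x -> K <= x `^ a.
Proof.
move=> a_gt0 K_gt0; exists (K `^ a^-1); split; first exact: powR_gt0.
move=> x Mx; rewrite -[leLHS](powRr1 (ltW K_gt0)) -(mulVf (lt0r_neq0 a_gt0)).
rewrite powRrM ge0_ler_powR ?nnegrE ?powR_ge0 ?(ltW a_gt0)//.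
exact: le_trans (powR_ge0 _ _) Mx.
Qed.

Lemma expR_sub1_le (y : R) : `|y| <= 1/2 -> `|expR y - 1| <= 2 * `|y|.
Proof.
rewrite ler_norml => /andP[y_ge y_le].
have lower := expR_ge1Dx y.
have upper : expR y * (1 - y) <= 1.
  rewrite -[X in _ <= X](expRxMexpNx_1 y) ler_wpM2l ?(ltW (expR_gt0 y))//.
  by have := expR_ge1Dx (- y); lra.
have := expR_gt0 y; set E := expR y in lower upper * => E_gt0.
rewrite ler_norml; case: (lerP 0 y) => y0;
  [rewrite ger0_norm // | rewrite ltr0_norm //]; apply/andP; split; nra.
Qed.

Lemma powR_sub1_le (r v h : R) : 0 < v -> `|v - 1| <= h -> h <= 1/2 ->
  `|r| * h <= 1/4 -> `|v `^ r - 1| <= 4 * `|r| * h.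
Proof.
move=> v_gt0 vh h_le rh_le.
have h_ge0 : 0 <= h := le_trans (normr_ge0 _) vh.
move: vh; rewrite ler_norml => /andP[v_ge v_le].
have ln_le : ln v <= h.
  by have := @le_ln1Dx R (v - 1) ltac:(lra); rewrite (addrC 1) subrK; lra.
have ln_ge : - (2 * h) <= ln v.
  have vV_gt0 : 0 < v^-1 by rewrite invr_gt0.
  have := @le_ln1Dx R (v^-1 - 1) ltac:(lra).
  rewrite (addrC 1) subrK lnV ?posrE//.
  have : v^-1 - 1 <= 2 * h.
    by rewrite -(ler_pM2l v_gt0) mulrBr mulfV ?gt_eqF // mulr1; nra.
  lra.
have rln_le : `|r * ln v| <= 2 * `|r| * h.
  rewrite normrM -mulrA [2 * _]mulrC -mulrA ler_wpM2l//.
  by rewrite mulrC ler_norml; apply/andP; split; lra.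
have rln_half : `|r * ln v| <= 1/2 by lra.
rewrite /powR gt_eqF//; have := expR_sub1_le _ rln_half; lra.
Qed.

Lemma powR_sub_le (r x u h : R) : 0 < x -> 0 <= u ->
  `|u - x| <= h * x -> h <= 1/2 -> `|r| * h <= 1/4 ->
  `|u `^ r - x `^ r| <= x `^ r * (4 * `|r| * h).
Proof.
move=> x_gt0 u_ge0 ux_le h_le rh_le.
have u_eq : u = x * (u / x) by rewrite mulrC divfK ?gt_eqF.
have ratio_near1 : `|u / x - 1| <= h.
  rewrite -(divff (lt0r_neq0 x_gt0)) -mulrBl normrM normfV (gtr0_norm x_gt0).
  by rewrite ler_pdivrMr.
have ratio_gt0 : 0 < u / x.
  by move: ratio_near1; rewrite ler_norml => /andP[? ?]; lra.
rewrite u_eq powRM ?(ltW x_gt0) ?(ltW ratio_gt0)// -[X in _ - X]mulr1.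
rewrite -mulrBr normrM ger0_norm ?powR_ge0// ler_wpM2l ?powR_ge0//.
exact: powR_sub1_le.
Qed.

Lemma maxr0_sub_maxNr0 (y : R) :
  Num.max y 0 - Num.max (- y) 0 = y.
Proof.
case: (lerP 0 y) => y0; first by rewrite max_r ?subr0 // oppr_le0.
by rewrite max_l ?sub0r ?opprK // oppr_ge0 ltW.
Qed.

Lemma exists_small_ratio (r : R) {G eps : R} : 0 <= G -> 0 < eps ->
  exists h, [/\ 0 < h, h <= 1/2, `|r| * h <= 1/4 & 4 * `|r| * h * G <= eps / 2].
Proof.
move=> G_ge0 eps_gt0.
have k_gt0 : 0 < Num.min (1/4) (eps/8) by rewrite lt_min; apply/andP; split; lra.
have k_le : Num.min (1/4) (eps/8) <= 1/4 /\ Num.min (1/4) (eps/8) <= eps/8.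
  by rewrite !ge_min !lexx orbT.
have rG_ge1 : 1 <= (`|r| + 1) * (G + 1) by have := normr_ge0 r; nra.
exists (Num.min (1/4) (eps/8) / ((`|r| + 1) * (G + 1))).
set k := Num.min _ _ in k_gt0 k_le *; set N := (_ * _) in rG_ge1 *.
have N_gt0 : 0 < N by lra.
have r_ge0 := normr_ge0 r.
have [rN_le rGN_le] : `|r| <= N /\ `|r| * G <= N by rewrite /N; split; nra.
have kN_N : k / N * N = k by rewrite divfK ?gt_eqF.
have kN_ge0 : 0 <= k / N by rewrite divr_ge0 ?ltW.
split; [exact: divr_gt0 | nra | nra | nra].
Qed.

Lemma drift_sum_error (T : eqType) (S : finType) (L : seq T)
    (lab : T -> S) (w f : T -> R) (g q : S -> R) (i : S) (y d m : R) :
  (forall t, t \in L -> 0 <= w t) -> \sum_(t <- L) w t <= 1 ->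
  0 <= y -> 0 <= d -> (forall t, t \in L -> `|f t - y| <= y * d) ->
  (forall j, 0 <= q j - \sum_(t <- L | lab t == j) w t <= m) ->
  `|\sum_(t <- L) w t * (g (lab t) * f t - g i * y)
      - y * \sum_(j : S) (g j - g i) * q j|
    <= y * (d * \sum_(j : S) `|g j| + m * \sum_(j : S) `|g j - g i|).
Proof.
move=> w_ge0 w_le1 y_ge0 d_ge0 f_near q_split.
pose b j := q j - \sum_(t <- L | lab t == j) w t.
have by_label : \sum_(t <- L) w t * (g (lab t) - g i)
    = \sum_(j : S) (g j - g i) * \sum_(t <- L | lab t == j) w t.
  under [RHS]eq_bigr do rewrite mulr_sumr big_mkcond.
  rewrite exchange_big /=; apply: eq_bigr => t _.
  rewrite (bigD1 (lab t)) //= eqxx big1 ?addr0 1?mulrC// => j.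
  by rewrite eq_sym => /negbTE ->.
have -> : \sum_(t <- L) w t * (g (lab t) * f t - g i * y)
    - y * \sum_(j : S) (g j - g i) * q j
    = \sum_(t <- L) w t * g (lab t) * (f t - y)
      - y * \sum_(j : S) (g j - g i) * b j.
  have -> : \sum_(j : S) (g j - g i) * q j
      = \sum_(t <- L) w t * (g (lab t) - g i) + \sum_(j : S) (g j - g i) * b j.
    rewrite by_label -big_split; apply: eq_bigr => j _; rewrite /b /= -mulrDr.
    by rewrite addrCA subrr addr0.
  rewrite mulrDr opprD addrA mulr_sumr -sumrB; congr (_ - _).
  by apply: eq_bigr => t _; ring.
apply: le_trans (ler_normB _ _) _; rewrite mulrDr; apply: lerD.
- apply: le_trans (ler_norm_sum _ _ _) _.
  apply: le_trans (_ : \sum_(t <- L) w t * (y * d * \sum_(j : S) `|g j|) <= _).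
    rewrite big_seq [leRHS]big_seq; apply: ler_sum => t tL.
    rewrite -mulrA normrM ger0_norm ?w_ge0// ler_wpM2l ?w_ge0// normrM mulrC.
    apply: ler_pM => //; first exact: f_near.
    by rewrite (bigD1 (lab t)) //= lerDl sumr_ge0.
  by rewrite -mulr_suml -mulrA ler_piMl// !mulr_ge0// sumr_ge0.
- rewrite normrM ger0_norm // ler_wpM2l // mulr_sumr.
  apply: le_trans (ler_norm_sum _ _ _) _; apply: ler_sum => j _.
  have /andP[b_ge0 b_le] := q_split j.
  by rewrite normrM (ger0_norm b_ge0) mulrC ler_wpM2r.
Qed.

End real_bounds.

Section markov_chain.
Context {R : realType} {S : finType} {Sigma : set (R * S)}.
Context {P : R * S -> R * S -> R}.
Hypotheses (Sigma_lf : locally_finite_state_space Sigma)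
  (P_kernel : transition_kernel Sigma P).

Definition window (x rho : R) : set (R * S) := [set t | `|t.1 - x| <= rho].

Lemma finite_window x rho : finite_set (Sigma `&` window x rho).
Proof.
apply: sub_finite_set (Sigma_lf.2 (x + rho)) => t [St].
by rewrite /window /= ler_norml => /andP[_ ?]; split => //; lra.
Qed.

Lemma kexpect_window s x rho (f : R * S -> R) :
  kexpect Sigma P s (fun t => f t * (if `|t.1 - x| <= rho then 1 else 0))
  = (\sum_(t <- fset_set (Sigma `&` window x rho)) P s t * f t)%:E.
Proof.
have out0 t : ~ window x rho t -> (if `|t.1 - x| <= rho then 1 else 0) = 0 :> R.
  by move/negP/negbTE ->.
rewrite /kexpect !(@esum_finite_support _ _ Sigma (window x rho) _ (finite_window x rho));
  do ?by move=> t _ /out0 ->; rewrite ?mulr0 ?oppr0 maxxx.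
  rewrite -EFinB -sumrB; congr EFin; rewrite big_seq [RHS]big_seq.
  apply: eq_bigr => t; rewrite (in_fset_set (finite_window x rho)) => /set_mem[_ /= ->].
  by rewrite mulr1 maxr0_sub_maxNr0.
all: by move=> t _; rewrite le_max lexx orbT.
Qed.

Lemma kexpect_nonneg s (f : R * S -> R) : (forall t, 0 <= f t) ->
  kexpect Sigma P s f = \esum_(t in Sigma) (P s t * f t)%:E.
Proof.
move=> f_ge0; rewrite /kexpect [X in (_ - X)%E]esum1 ?sube0; last first.
  by move=> t _; rewrite max_r // oppr_le0 mulr_ge0 // P_kernel.1.
by apply: eq_esum => t _; rewrite max_l // mulr_ge0 // P_kernel.1.
Qed.

Lemma window_mass_le1 s x rho : Sigma s ->
  \sum_(t <- fset_set (Sigma `&` window x rho)) P s t <= 1.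
Proof.
move=> Ss; rewrite -lee_fin -(P_kernel.2 _ Ss).
rewrite -esum_finite; last by move=> t _; apply: P_kernel.1.
  by apply: esum_setI_le => t _; apply: P_kernel.1.
exact: finite_window.
Qed.

Lemma far_mass_le s rho p Cp : 0 < rho -> 0 <= p ->
  (kexpect Sigma P s (fun t => (`|t.1 - s.1| `^ p)%R) <= Cp%:E)%E ->
  (\esum_(t in Sigma `&` ~` window s.1 rho) (P s t)%:E <= (Cp / rho `^ p)%:E)%E.
Proof.
move=> rho_gt0 p_ge0; rewrite kexpect_nonneg => [moment|t]; last exact: powR_ge0.
have P_ge0 := P_kernel.1 s.
rewrite mulrC EFinM lee_pdivlMl ?powR_gt0// -esumZl ?powR_gt0//.
apply: le_trans moment; apply: le_trans (esum_setI_le _ (~` window s.1 rho) _ _).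
  apply: le_esum => t [_ far]; rewrite lee_fin mulrC ler_wpM2l//.
  apply: ge0_ler_powR; rewrite ?nnegrE ?powR_ge0 ?(ltW rho_gt0)//.
  by apply: ltW; rewrite ltNge; apply/negP.
by move=> t _; rewrite mulr_ge0 ?powR_ge0.
Qed.

Lemma qprob_window x i j rho : Sigma (x, i) ->
  exists b, [/\ 0 <= b,
    (b%:E <= \esum_(t in Sigma `&` ~` window x rho) (P (x, i) t)%:E)%E &
    qprob Sigma P x i j
      = \sum_(t <- fset_set (Sigma `&` window x rho) | t.2 == j) P (x, i) t + b].
Proof.
move=> Sx; have P_ge0 := P_kernel.1 (x, i).
rewrite /qprob [X in fine X](esumID (window x rho)); last by move=> t _; rewrite lee_fin.
rewrite (setIAC Sigma _ (window x rho)) (setIAC Sigma _ (~` window x rho)).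
set near := (\esum_(t in _ `&` window x rho `&` _) _)%E.
have -> : near
    = (\sum_(t <- fset_set (Sigma `&` window x rho) | t.2 == j) P (x, i) t)%:E.
  rewrite /near esum_mkcondr big_mkcond -(esum_finite _ _ (finite_window x rho));
    last by move=> t _; case: eqP.
  apply: eq_esum => t _; case: eqP => [<-|tj]; first by rewrite ifT// mem_set.
  by rewrite ifF//; apply/negP => /set_mem.
set far := (\esum_(t in Sigma `&` ~` window x rho `&` _) _)%E.
have far_le : (far <= \esum_(t in Sigma `&` ~` window x rho) (P (x, i) t)%:E)%E.
  exact: esum_setI_le.
have far_fin : far \is a fin_num.
  rewrite ge0_fin_numE; last by apply: esum_ge0 => t _; rewrite lee_fin.
  apply: le_lt_trans far_le _.
  apply: le_lt_trans (esum_setI_le _ _ _ (fun t _ => P_ge0 t)) _.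
  by rewrite (P_kernel.2 _ Sx) ltry.
have far_ge0 : (0 <= far)%E by apply: esum_ge0 => t _; rewrite lee_fin.
exists (fine far); split; first exact: fine_ge0.
  by rewrite fineK.
by rewrite -[in LHS](fineK far_fin) -EFinD.
Qed.

Lemma truncated_drift_estimate (g : S -> R) (r : R) {x : R} {i : S} {rho h p Cp : R} :
  Sigma (x, i) -> 0 < x -> 0 < rho -> rho <= h * x -> h <= 1/2 ->
  `|r| * h <= 1/4 -> 0 <= p ->
  (kexpect Sigma P (x, i) (fun t => (`|t.1 - x| `^ p)%R) <= Cp%:E)%E ->
  exists e : R, `|e| <= x `^ r * (4 * `|r| * h * \sum_(j : S) `|g j|
                               + Cp / rho `^ p * \sum_(j : S) `|g j - g i|) /\
    kexpect Sigma P (x, i)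
      (fun t => (g t.2 * t.1 `^ r - g i * x `^ r)
                * (if `|t.1 - x| <= rho then 1 else 0))
    = (x `^ r * (\sum_(j : S) (g j - g i) * qprob Sigma P x i j) + e)%:E.
Proof.
move=> Sx x_gt0 rho_gt0 rho_le h_le rh_le p_ge0 moment.
have far_le := far_mass_le _ _ _ _ rho_gt0 p_ge0 moment.
set W := fset_set (Sigma `&` window x rho).
have W_window t : t \in W -> Sigma t /\ `|t.1 - x| <= rho.
  by rewrite /W (in_fset_set (finite_window x rho)) => /set_mem.
rewrite kexpect_window -/W.
exists (\sum_(t <- W) P (x, i) t * (g t.2 * t.1 `^ r - g i * x `^ r)
        - x `^ r * \sum_(j : S) (g j - g i) * qprob Sigma P x i j).
split; last by rewrite subrKC.
apply: drift_sum_error => [t _||||t /W_window[St t_near]|j].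
- exact: P_kernel.1.
- exact: window_mass_le1.
- exact: powR_ge0.
- by rewrite !mulr_ge0// ltW// -(pmulr_lgt0 _ x_gt0) (lt_le_trans rho_gt0).
- by apply: powR_sub_le => //; [exact: Sigma_lf.1 St | exact: le_trans rho_le].
- have [b [b_ge0 b_le ->]] := qprob_window _ _ j rho Sx.
  rewrite addrC addKr b_ge0 -lee_fin; exact: le_trans far_le.
Qed.

End markov_chain.

Theorem lemma3p5 (R : realType) (S : finType) (Sigma : set (R * S))
    (P : R * S -> R * S -> R) (p Cp : R) (r zeta : R) (g : S -> R) :
  locally_finite_state_space Sigma ->
  transition_kernel Sigma P ->
  0 < p ->
  (forall s, Sigma s ->
     (kexpect Sigma P s (fun t => (`|t.1 - s.1| `^ p)%R) <= Cp%:E)%E) ->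
  0 < zeta < 1 ->
  forall (i : S) (eps : R), 0 < eps ->
  exists M : R, forall x : R, Sigma (x, i) -> M <= x ->
    exists e : R, `|e| <= eps * x `^ r /\
      kexpect Sigma P (x, i)
        (fun t => (g t.2 * t.1 `^ r - g i * x `^ r)
                  * (if `|t.1 - x| <= x `^ zeta then 1 else 0))
      = (x `^ r * (\sum_(j : S) (g j - g i) * qprob Sigma P x i j) + e)%:E.
Proof.
move=> Sigma_lf P_kernel p_gt0 moment /andP[zeta_gt0 zeta_lt1] i eps eps_gt0.
set G := \sum_(j : S) `|g j|; set K := \sum_(j : S) `|g j - g i|.
have [G_ge0 K_ge0] : 0 <= G /\ 0 <= K by split; apply: sumr_ge0.
have [h [h_gt0 h_le rh_le rhG_le]] := exists_small_ratio r G_ge0 eps_gt0.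
have [zeta'_gt0 hV_gt0] : 0 < 1 - zeta /\ 0 < h^-1.
  by rewrite subr_gt0 invr_gt0.
have [M1 [M1_gt0 M1P]] := powR_eventually_ge zeta'_gt0 hV_gt0.
have D_gt0 : 0 < 2 * (K + 1) * (`|Cp| + 1) / eps.
  by rewrite divr_gt0 //; have := normr_ge0 Cp; nra.
have [M2 [_ M2P]] := powR_eventually_ge (mulr_gt0 zeta_gt0 p_gt0) D_gt0.
exists (Num.max M1 M2) => x Sx; rewrite ge_max => /andP[xM1 xM2].
have x_gt0 : 0 < x := lt_le_trans M1_gt0 xM1.
have rho_le : x `^ zeta <= h * x.
  have x_split : x = x `^ zeta * x `^ (1 - zeta).
    by rewrite -powRD ?subrKC ?powRr1 ?(ltW x_gt0) // gt_eqF ?implybT.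
  rewrite {2}x_split mulrCA -[leLHS]mulr1 ler_wpM2l ?powR_ge0 //.
  by move: (M1P _ xM1) => /(ler_wpM2l (ltW h_gt0)); rewrite divff ?gt_eqF.
have tail_le : Cp / (x `^ zeta) `^ p * K <= eps / 2.
  rewrite -powRrM; have c_gt0 : 0 < x `^ (zeta * p) := powR_gt0 _ x_gt0.
  have := M2P _ xM2; rewrite ler_pdivrMr // => c_large.
  rewrite mulrAC ler_pdivrMr //; have := ler_norm Cp; nra.
have [e [e_le ->]] := truncated_drift_estimate Sigma_lf P_kernel g r Sx x_gt0
  (powR_gt0 _ x_gt0) rho_le h_le rh_le (ltW p_gt0) (moment _ Sx).
exists e; split => //; apply: le_trans e_le _.
by rewrite [leRHS]mulrC ler_wpM2l ?powR_ge0 // -/G -/K; lra.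
Qed.
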